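(* Given a quantum circuit $\mathcal C$ and its associated packet sequence $\Omega=(\mathcal{P}_1,\dots,\mathcal{P}_m)$, if $\Gamma=(\mathcal{Q}_1,\dots,\mathcal{Q}_{\ell})$ with $\ell < m$ is a packing sequence constructed from $\Omega$ by merging packets then $\mathcal D(\Gamma)\leq \mathcal D(\Omega)$ for every possible qubit allocation map $\mathcal{A}$.
   Context: Gates are drawn from $S=\{CU\mid U\in \mathbb{U}(2)\}\cup \mathbb{SU}(2)$. A gate packet $\mathcal P$ on sub-register $R_\mathcal P$ rooted on qubit $q$ is a sequence of consecutive gates where every controlled gate is controlled by $q$, every single-qubit gate on $q$ is diagonal or anti-diagonal, and every qubit of $R_\mathcal P\setminus\{q\}$ is targeted by some controlled gate of $\mathcal P$; its unitary has the form $(|0\rangle\langle 0|\cdot D)\otimes A+(|1\rangle\langle 1|\cdot D)\otimes B$ with $D\in\{I,X\}$ and $A,B$ tensor products of single-qubit unitaries. An allocation map is $\mathcal A:R\to L$ assigning each qubit to a QPU. A packing sequence $\Omega_\mathcal C=(\mathcal P_1,\dots,\mathcal P_m)$ is a sequence of gate packets such that every gate of $\mathcal C$ belongs to a unique packet and $\mathcal C$ is recovered from $\Omega_\mathcal C$ by adding single-qubit gates between its elements. The distribution cost is $\mathcal D(\Omega_\mathcal C)=\sum_{\mathcal P\in\Omega_\mathcal C}[|\mathcal A(R_\mathcal P)|-1]$ where $\mathcal A(R_\mathcal P)=\{\mathcal A(q):q\in R_\mathcal P\}$. Two adjacent packets $\mathcal P_i,\mathcal P_{i+1}$ rooted on the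 same control qubit can be merged into a single packet $\mathcal P_i\cdot\mathcal P_{i+1}$. *)

From mathcomp Require Import all_boot all_order all_algebra all_field.
From Stdlib Require List.
Set Implicit Arguments. Unset Strict Implicit. Unset Printing Implicit Defensive.
Import Order.TTheory GRing.Theory Num.Theory.
Local Open Scope ring_scope.

Section Defs.
Variables (Q L : finType). (* Q = register R of qubits, L = set of QPUs *)

Definition unitary2 (U : 'M[algC]_2) : Prop :=
  U *m (map_mx Num.conj U)^T = 1%:M.
Definition special_unitary2 (U : 'M[algC]_2) : Prop :=
  unitary2 U /\ \det U = 1.

Definition diagonal2 (U : 'M[algC]_2) : bool :=
  (U 0 1 == 0) && (U 1 0 == 0).
Definition antidiagonal2 (U : 'M[algC]_2) : bool :=
  (U 0 0 == 0) && (U 1 1 == 0).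

(* Gates of S = { CU | U in U(2) } u SU(2) *)
Inductive gate : Type :=
| CGate of Q (* control *) & Q (* target *) & 'M[algC]_2
| SGate of Q & 'M[algC]_2.

Definition wf_gate (g : gate) : Prop :=
  match g with
  | CGate c t U => c <> t /\ unitary2 U
  | SGate _ U => special_unitary2 U
  end.

Definition is_single (g : gate) : bool :=
  if g is SGate _ _ then true else false.

Definition gate_qubits (g : gate) : {set Q} :=
  match g with
  | CGate c t _ => [set c; t]
  | SGate t _ => [set t]
  end.

Definition circuit := seq gate.

Record packet := Packet { proot : Q; preg : {set Q}; pgates : seq gate }.

Definition is_packet (P : packet) : Prop :=
  [/\ proot P \in preg P,
      (forall g, List.In g (pgates P) -> gate_qubits g \subset preg P),
      (forall c t U, List.In (CGate c t U) (pgates P) -> c = proot P),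
      (forall U, List.In (SGate (proot P) U) (pgates P) ->
                 diagonal2 U || antidiagonal2 U) &
      (forall x, x \in preg P -> x <> proot P ->
         exists U, List.In (CGate (proot P) x U) (pgates P))].

Fixpoint interleave (fill : seq circuit) (Om : seq packet) : circuit :=
  match fill, Om with
  | s :: fill', P :: Om' => s ++ pgates P ++ interleave fill' Om'
  | s :: _, [::] => s
  | [::], _ => [::]
  end.

Definition is_packing (C : circuit) (Om : seq packet) : Prop :=
  (forall P, List.In P Om -> is_packet P) /\
  exists fill : seq circuit,
    [/\ size fill = (size Om).+1,
        (forall s g, List.In s fill -> List.In g s -> is_single g) &
        C = interleave fill Om].

Definition merge_packets (P P' : packet) (mid : seq gate) : packet :=
  Packet (proot P) (preg P :|: preg P') (pgates P ++ mid ++ pgates P').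

Inductive merge_step : seq packet -> seq packet -> Prop :=
| MergeStep (O1 O2 : seq packet) (P P' : packet) (mid : seq gate) :
    proot P = proot P' ->
    (forall g, List.In g mid -> is_single g) ->
    is_packet (merge_packets P P' mid) ->
    merge_step (O1 ++ P :: P' :: O2) (O1 ++ merge_packets P P' mid :: O2).

Inductive merged_from : seq packet -> seq packet -> Prop :=
| MF_refl Om : merged_from Om Om
| MF_step Om Om' Om'' : merge_step Om Om' -> merged_from Om' Om'' ->
                        merged_from Om Om''.

Definition dist_cost (A : Q -> L) (Om : seq packet) : nat :=
  \sum_(P <- Om) (#|A @: preg P| - 1)%N.

End Defs.

From mathcomp Require Import all_boot all_order all_algebra all_field.
From mathcomp Require Import zify.

Set Implicit Arguments.
Unset Strict Implicit.
Unset Printing Implicit Defensive.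

(* Merging two packets rooted on the same qubit q replaces the registers R and
   R' by R :|: R'. Both images A @: R and A @: R' contain the QPU A q, so
   |A(R u R')| <= |A(R)| + |A(R')| - 1 and the cost of the merged packet is at
   most the sum of the two costs it replaces. Merging also preserves the fact
   that every element is a packet, so the bound propagates along any sequence
   of merges. *)

Lemma leq_cardsU_meet (T : finType) (X Y : {set T}) (x : T) :
  x \in X -> x \in Y -> (#|X :|: Y| - 1 <= (#|X| - 1) + (#|Y| - 1))%N.
Proof.
move=> xX xY; rewrite cardsU.
have : (0 < #|X :&: Y|)%N by apply/card_gt0P; exists x; rewrite inE xX.
have : (#|X :&: Y| <= #|X|)%N by rewrite subset_leq_card ?subsetIl.
have : (#|X :&: Y| <= #|Y|)%N by rewrite subset_leq_card ?subsetIr.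
lia.
Qed.

Section Merging.
Variables (Q L : finType) (A : Q -> L).

Definition all_packets (Om : seq (packet Q)) : Prop :=
  forall P, List.In P Om -> is_packet P.

Lemma all_packets_cat Om1 Om2 :
  all_packets (Om1 ++ Om2) <-> all_packets Om1 /\ all_packets Om2.
Proof.
split=> [HO | [HO1 HO2] P].
  by split=> P HP; apply: HO; apply: List.in_or_app; [left | right].
by case/(List.in_app_or _ _ _); [apply: HO1 | apply: HO2].
Qed.

Lemma all_packets_cons P Om :
  all_packets (P :: Om) <-> is_packet P /\ all_packets Om.
Proof.
split=> [HO | [HP HO] X [<- // | ?]]; last exact: HO.
by split=> [| X HX]; apply: HO; [left | right].
Qed.

Lemma dist_cost_merge_packets (P P' : packet Q) mid :
  proot P = proot P' -> is_packet P -> is_packet P' ->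
  (#|A @: preg (merge_packets P P' mid)| - 1
     <= (#|A @: preg P| - 1) + (#|A @: preg P'| - 1))%N.
Proof.
move=> eq_root [rootP _ _ _ _] [rootP' _ _ _ _].
rewrite /= imsetU; apply: (@leq_cardsU_meet _ _ _ (A (proot P))).
  exact: imset_f.
by rewrite eq_root imset_f.
Qed.

Lemma merge_step_all_packets Om Om' :
  merge_step Om Om' -> all_packets Om -> all_packets Om'.
Proof.
case=> O1 O2 P P' mid _ _ merged.
by rewrite !all_packets_cat !all_packets_cons => -[HO1 [_ [_ HO2]]].
Qed.

Lemma merge_step_dist_cost Om Om' :
  merge_step Om Om' -> all_packets Om ->
  (dist_cost A Om' <= dist_cost A Om)%N.
Proof.
case=> O1 O2 P P' mid eq_root _ _.
rewrite all_packets_cat !all_packets_cons => -[_ [pP [pP' _]]].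
rewrite /dist_cost !big_cat !big_cons /= leq_add2l addnA leq_add2r.
exact: dist_cost_merge_packets.
Qed.

Lemma merged_from_dist_cost Om Om' :
  merged_from Om Om' -> all_packets Om ->
  (dist_cost A Om' <= dist_cost A Om)%N.
Proof.
elim=> [// | O O' O'' step _ IH] HO.
have HO' := merge_step_all_packets step HO.
exact: leq_trans (IH HO') (merge_step_dist_cost step HO).
Qed.

End Merging.

Theorem proposition2 (Q L : finType) (C : circuit Q)
    (Omega Gamma : seq (packet Q)) :
  (forall g, List.In g C -> wf_gate g) ->
  is_packing C Omega ->
  is_packing C Gamma ->
  merged_from Omega Gamma ->
  (size Gamma < size Omega)%N ->
  forall A : Q -> L, (dist_cost A Gamma <= dist_cost A Omega)%N.
Proof.
move=> _ [packets_Omega _] _ merged _ A.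
exact: merged_from_dist_cost merged packets_Omega.
Qed.
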